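(* Let $\mathcal{P}_1,\mathcal{P}_2\subseteq\mathbb{R}^n$ be non-empty not necessarily closed (NNC) convex polyhedra. Suppose there exist a linear constraint $\beta=(\langle\mathbf{a},\mathbf{x}\rangle\bowtie b)$ with $\mathbf{a}\neq\mathbf{0}$ and $\bowtie\in\{<,\le\}$, and a vector $\mathbf{p}\in\mathbb{R}^n$ such that: (1) $\mathbf{p}$ saturates $\beta$, i.e., $\langle\mathbf{a},\mathbf{p}\rangle=b$; (2) every point of $\mathcal{P}_1$ satisfies $\beta$, while some point of $\mathcal{P}_2$ violates $\beta$; (3) $\mathbf{p}\in\mathbb{C}(\mathcal{P}_1)\setminus\mathbb{C}(\mathcal{P}_2)$. Then $\mathcal{P}_1\uplus\mathcal{P}_2\neq\mathcal{P}_1\cup\mathcal{P}_2$.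
   Context: An NNC convex polyhedron in $\mathbb{R}^n$ is the set of solutions of a finite system of strict ($\langle\mathbf{a},\mathbf{x}\rangle<b$) and non-strict ($\langle\mathbf{a},\mathbf{x}\rangle\le b$) linear inequalities with $\mathbf{a}\neq\mathbf{0}$. $\mathbb{C}(S)$ denotes the topological closure of $S\subseteq\mathbb{R}^n$. $\mathcal{P}_1\uplus\mathcal{P}_2$ denotes the smallest NNC polyhedron containing $\mathcal{P}_1\cup\mathcal{P}_2$ (the NNC convex polyhedral hull). *)

From Stdlib Require Lists.List.
From HB Require Import structures.
From mathcomp Require Import all_boot all_order all_algebra.
From mathcomp Require Import all_classical all_reals all_analysis.
Set Implicit Arguments. Unset Strict Implicit. Unset Printing Implicit Defensive.
Import Order.TTheory GRing.Theory Num.Theory.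
Import numFieldTopology.Exports numFieldNormedType.Exports.
Local Open Scope ring_scope.
Local Open Scope classical_set_scope.

Definition dotv (R : realType) (n : nat) (a x : 'rV[R]_n) : R :=
  \sum_(i < n) a ord0 i * x ord0 i.

(* a linear constraint <a,x> ⋈ b, with ⋈ = '<' if strict = true, '<=' otherwise *)
Record lcons (R : realType) (n : nat) := LCons {
  lc_a : 'rV[R]_n; lc_b : R; lc_strict : bool }.

Definition sat (R : realType) (n : nat) (c : lcons R n) (x : 'rV[R]_n) : Prop :=
  if lc_strict c then dotv (lc_a c) x < lc_b c else dotv (lc_a c) x <= lc_b c.

Definition saturates (R : realType) (n : nat) (p : 'rV[R]_n) (c : lcons R n) : Prop :=
  dotv (lc_a c) p = lc_b c.

Definition nnc_poly (R : realType) (n : nat) (P : set 'rV[R]_n) : Prop :=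
  exists cs : seq (lcons R n),
    (forall c, Stdlib.Lists.List.In c cs -> lc_a c != 0) /\
    P = [set x | forall c, Stdlib.Lists.List.In c cs -> sat c x].

Definition nnc_hull (R : realType) (n : nat) (P1 P2 : set 'rV[R]_n) : set 'rV[R]_n :=
  [set x | forall Q : set 'rV[R]_n, nnc_poly Q -> P1 `|` P2 `<=` Q -> Q x].

(* Take q in P2 violating beta and push p towards q: the points
   z = (1 - t) p + t q with 0 < t <= 1 satisfy every constraint valid on
   P1 and P2 (p satisfies its non-strict closure, q the constraint itself),
   so they lie in P1 ⊎ P2.  Since beta is saturated at p and violated at q,
   z violates beta and is not in P1; for t small z is close to p, hence
   outside the closure of P2. *)

From HB Require Import structures.
From mathcomp Require Import all_boot all_order all_algebra.
From mathcomp Require Import all_classical all_reals all_analysis.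
From mathcomp Require Import ring lra.
Import Order.TTheory GRing.Theory Num.Theory.
Import numFieldTopology.Exports numFieldNormedType.Exports.
Local Open Scope ring_scope.
Local Open Scope classical_set_scope.

Lemma continuous_sum (R : realType) (T : topologicalType) (I : Type)
    (r : seq I) (f : I -> T -> R) :
  (forall i, continuous (f i)) -> continuous (fun x => \sum_(i <- r) f i x).
Proof.
move=> fc; elim: r => [|j r IH].
  under eq_fun do rewrite big_nil; exact: cst_continuous.
under eq_fun do rewrite big_cons.
move=> x; exact: continuousD (fc j x) (IH x).
Qed.

Lemma dotv_continuous (R : realType) n (a : 'rV[R]_n) : continuous (dotv a).
Proof.
apply: continuous_sum => i x.
exact: (cvgM (cvg_cst _) (@coord_continuous R 1 n ord0 i x)).
Qed.

Lemma dotv_comb (R : realType) n (a p q : 'rV[R]_n) t :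
  dotv a ((1 - t) *: p + t *: q) = (1 - t) * dotv a p + t * dotv a q.
Proof.
rewrite /dotv !mulr_sumr -big_split; apply: eq_bigr => i _.
by rewrite !mxE /=; ring.
Qed.

Lemma closure_sat_le (R : realType) n (c : lcons R n) (A : set 'rV[R]_n) p :
  (forall x, A x -> sat c x) -> closure A p -> dotv (lc_a c) p <= lc_b c.
Proof.
move=> Ac clAp.
pose S := dotv (lc_a c) @^-1` [set y : R | y <= lc_b c].
have closedS : closed S.
  by apply: preimage_closed; [move=> x _; exact: dotv_continuous | exact: closed_le].
have AS : A `<=` S.
  by move=> x /Ac; rewrite /sat /S /=; case: (lc_strict c) => // /ltW.
by have := closureS AS clAp; rewrite -(closure_id S).1.
Qed.

Lemma sat_comb (R : realType) n (c : lcons R n) (p q : 'rV[R]_n) t :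
  0 < t <= 1 -> dotv (lc_a c) p <= lc_b c -> sat c q ->
  sat c ((1 - t) *: p + t *: q).
Proof.
move=> /andP[t_gt0 t_le1] cp; rewrite /sat dotv_comb.
have cp' : (1 - t) * dotv (lc_a c) p <= (1 - t) * lc_b c.
  by apply: ler_wpM2l => //; lra.
case: (lc_strict c) => cq.
  have : t * dotv (lc_a c) q < t * lc_b c by rewrite ltr_pM2l.
  lra.
have : t * dotv (lc_a c) q <= t * lc_b c by rewrite ler_pM2l.
lra.
Qed.

Lemma not_sat_comb (R : realType) n (c : lcons R n) (p q : 'rV[R]_n) t :
  0 < t -> saturates p c -> ~ sat c q -> ~ sat c ((1 - t) *: p + t *: q).
Proof.
rewrite /sat /saturates dotv_comb => t_gt0 ->.
case: (lc_strict c) => /negP; rewrite -?real_ltNge -?real_leNgt ?num_real // => cq.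
  have : t * lc_b c <= t * dotv (lc_a c) q by rewrite ler_pM2l.
  lra.
have : t * lc_b c < t * dotv (lc_a c) q by rewrite ltr_pM2l.
lra.
Qed.

Lemma nnc_hull_comb (R : realType) n (P1 P2 : set 'rV[R]_n) p q t :
  0 < t <= 1 -> closure P1 p -> P2 q -> nnc_hull P1 P2 ((1 - t) *: p + t *: q).
Proof.
move=> t01 clp P2q Q [cs [_ ->]] P12Q c csc.
apply: sat_comb => //; last exact: P12Q (or_intror P2q) c csc.
by apply: closure_sat_le clp => x P1x; exact: P12Q (or_introl P1x) c csc.
Qed.

Lemma not_closure_ball {R : numDomainType} {T : pseudoMetricType R}
    {A : set T} {p : T} :
  ~ closure A p -> exists2 e : R, 0 < e & forall x, ball p e x -> ~ A x.
Proof.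
move=> nclp; have [B pB BA] : exists2 B, nbhs p B & forall x, B x -> ~ A x.
  apply: contrapT => noB; apply: nclp => B pB; apply: contrapT => BnA.
  by apply: noB; exists B => // x Bx Ax; apply: BnA; exists x.
have /nbhs_ballP[e e_gt0 eB] := pB.
by exists e => // x /eB /BA.
Qed.

Lemma comb_ball {R : realFieldType} {V : normedModType R} (p q : V) {e : R} :
  0 < e -> exists2 t, 0 < t <= 1 & ball p e ((1 - t) *: p + t *: q).
Proof.
move=> e_gt0; pose d := `|p - q|.
have d_ge0 : 0 <= d by exact: normr_ge0.
have ed_gt0 : 0 < e + d by lra.
exists (e / (e + d)).
  by rewrite divr_gt0 //= ler_pdivrMr // mul1r; lra.
rewrite -ball_normE /=.
have -> : p - ((1 - e / (e + d)) *: p + e / (e + d) *: q) = e / (e + d) *: (p - q).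
  by rewrite scalerBl scale1r scalerBr opprD opprB addrA [p + _]addrCA subrr addr0.
rewrite normrZ gtr0_norm ?divr_gt0 // -/d mulrAC ltr_pdivrMr // mulrDr.
have : 0 < e * e by exact: mulr_gt0.
lra.
Qed.

Theorem lemma2 (R : realType) (n : nat) (P1 P2 : set 'rV[R]_n)
  (beta : lcons R n) (p : 'rV[R]_n) :
  nnc_poly P1 -> nnc_poly P2 -> P1 !=set0 -> P2 !=set0 ->
  lc_a beta != 0 ->
  saturates p beta ->
  (forall x, P1 x -> sat beta x) ->
  (exists x, P2 x /\ ~ sat beta x) ->
  closure P1 p -> ~ closure P2 p ->
  nnc_hull P1 P2 <> P1 `|` P2.
Proof.
move=> _ _ _ _ _ p_sat P1_beta [q [P2q q_nsat]] clp nclp hullE.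
have [e e_gt0 ball_nP2] := not_closure_ball nclp.
have [t t01 z_ball] := comb_ball p q e_gt0.
have /andP[t_gt0 _] := t01.
have : (P1 `|` P2) ((1 - t) *: p + t *: q).
  by rewrite -hullE; exact: nnc_hull_comb.
case=> [/P1_beta|]; last exact: ball_nP2.
exact: not_sat_comb p_sat q_nsat.
Qed.
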